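(* Let $q$ be an odd prime power, let $d \geq 1$ and $n \geq 2$ be integers, and let $M_n(\mathbb{F}_q)$ denote the set of $n \times n$ matrices with entries in the finite field $\mathbb{F}_q$. Let $\mathcal{A}_1,\dots,\mathcal{A}_d,\mathcal{B}_1,\dots,\mathcal{B}_d,\mathcal{E},\mathcal{F} \subset M_n(\mathbb{F}_q)$, and let $N$ be the number of tuples $(A_1,\dots,A_d,B_1,\dots,B_d,E,F)$ with $A_i \in \mathcal{A}_i$, $B_i \in \mathcal{B}_i$ ($1 \le i \le d$), $E \in \mathcal{E}$, $F \in \mathcal{F}$ satisfying \[ A_1B_1 + A_2B_2 + \dots + A_dB_d = E + F. \] Then \[ \left| N - \frac{|\mathcal{E}||\mathcal{F}|\prod_{i=1}^d |\mathcal{A}_i||\mathcal{B}_i|}{q^{n^2}} \right| \ll q^{dn^2 - (d-1)n/2 - 1/2} \sqrt{|\mathcal{E}||\mathcal{F}|\prod_{i=1}^d|\mathcal{A}_i||\mathcal{B}_i|}. \]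
   Context: The notation $X \ll Y$ means $X \le C\,Y$ for some positive constant $C$ depending only on $d$ and $n$ (not on $q$ or on the sets). *)

From HB Require Import structures.
From mathcomp Require Import all_boot all_order all_algebra all_field.
Set Implicit Arguments. Unset Strict Implicit. Unset Printing Implicit Defensive.
Import Order.TTheory GRing.Theory Num.Theory.
Local Open Scope ring_scope.

(* The tuples (A_1..A_d, B_1..B_d, E, F) of n x n matrices over F. *)
Definition sol_tuple (F : finFieldType) (d n : nat) : finType :=
  ({ffun 'I_d -> 'M[F]_n} * {ffun 'I_d -> 'M[F]_n} * 'M[F]_n * 'M[F]_n)%type.

Definition count_sol (F : finFieldType) (d n : nat)
  (As Bs : 'I_d -> {set 'M[F]_n}) (Es Fs : {set 'M[F]_n}) : nat :=
  #|[set x : sol_tuple F d n |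
      [&& [forall i, x.1.1.1 i \in As i],
          [forall i, x.1.1.2 i \in Bs i],
          x.1.2 \in Es, x.2 \in Fs &
          (\sum_(i < d) (x.1.1.1 i *m x.1.1.2 i) == x.1.2 + x.2)]]|.

From HB Require Import structures.
From mathcomp Require Import all_boot all_order all_algebra all_field.
From mathcomp Require Import ring zify.
Set Implicit Arguments.
Unset Strict Implicit.
Unset Printing Implicit Defensive.
Import Order.TTheory GRing.Theory Num.Theory.
Local Open Scope ring_scope.

(* Fourier analysis on the additive group of M_n(F) with the characters
   X |-> psi (tr (M X)).  Orthogonality gives
   q^(n^2) N = sum_M prod_i S_i(M) E^(M) F^(M), with
   S_i(M) = sum_(a in A_i, b in B_i) psi (tr (M a b)), and the term M = 0 is the
   main term.  For M <> 0, Cauchy-Schwarz in a and orthogonality reduce |S_i(M)|^2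
   to counting pairs with b M = b' M; as {Y | Y M = 0} has at most q^(n^2 - n)
   elements, |S_i(M)|^2 <= |A_i| |B_i| q^(2n^2 - n).  Cauchy-Schwarz in M and
   Parseval for E^ and F^ then bound the error by q^(dn^2 - dn/2) sqrt P, which
   beats the claim since dn >= (d - 1)n + 1. *)

Lemma cauchy_schwarz (R : numDomainType) (I : finType) (P : pred I) (a b : I -> R) :
  (forall i, a i \is Num.real) -> (forall i, b i \is Num.real) ->
  (\sum_(i | P i) a i * b i) ^+ 2 <=
  (\sum_(i | P i) a i ^+ 2) * (\sum_(i | P i) b i ^+ 2).
Proof.
move=> ra rb.
have lagrange : \sum_(i | P i) \sum_(j | P j) (a i * b j - a j * b i) ^+ 2 =
  2 * ((\sum_(i | P i) a i ^+ 2) * (\sum_(i | P i) b i ^+ 2)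
       - (\sum_(i | P i) a i * b i) ^+ 2).
  have sqr_expand i j : (a i * b j - a j * b i) ^+ 2 =
     a i ^+ 2 * b j ^+ 2 + b i ^+ 2 * a j ^+ 2 - (2 * (a i * b i)) * (a j * b j).
    by ring.
  under eq_bigr do under eq_bigr do rewrite sqr_expand.
  under eq_bigr do rewrite sumrB big_split /= -!mulr_sumr.
  rewrite sumrB big_split /= -!mulr_suml -mulr_sumr.
  ring.
have : 0 <= \sum_(i | P i) \sum_(j | P j) (a i * b j - a j * b i) ^+ 2.
  apply: sumr_ge0 => i _; apply: sumr_ge0 => j _.
  by rewrite -realEsqr realB ?realM.
by rewrite lagrange pmulr_rge0 // subr_ge0.
Qed.

Lemma sqr_sum_le_card (R : numDomainType) (I : finType) (A : {pred I}) (x : I -> R) :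
  (forall i, x i \is Num.real) ->
  (\sum_(i in A) x i) ^+ 2 <= #|A|%:R * \sum_(i in A) x i ^+ 2.
Proof.
move=> rx; have := cauchy_schwarz (mem A) (fun=> real1 R) rx.
by under eq_bigr do rewrite mul1r; rewrite expr1n sumr_const.
Qed.

Lemma sum_char_eq0 (R : idomainType) (V : finZmodType) (chi : V -> R) (v0 : V) :
  {morph chi : x y / x + y >-> x * y} -> chi v0 != 1 -> \sum_x chi x = 0.
Proof.
move=> chiD chi_v0; set S := \sum_x chi x.
have : S = chi v0 * S.
  rewrite /S {1}(reindex_inj (addIr v0)) /= mulr_sumr.
  by apply: eq_bigr => x _; rewrite chiD mulrC.
move/eqP; rewrite -{1}(mul1r S) -subr_eq0 -mulrBl mulf_eq0 subr_eq0 eq_sym.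
by rewrite (negbTE chi_v0) => /eqP.
Qed.

Lemma exists_Fp_functional (F : finFieldType) (p : nat) : p \in [pchar F] ->
  exists2 lam : F -> 'F_p, {morph lam : x y / x + y} & lam 1 != 0.
Proof.
move=> chF; have [f lin_f bij_f] := pprimeChar_vectAxiom chF.
have fD : {morph f : x y / x + y}.
  by move=> x y; have := lin_f 1 x y; rewrite !scale1r.
have f0 : f 0 = 0 by apply: (addrI (f 0)); rewrite -fD !addr0.
have /matrix0Pn [i [j fj]] : f 1 != 0.
  by rewrite -f0 (inj_eq (bij_inj bij_f)) oner_eq0.
by exists (fun x => f x i j) => // x y; rewrite fD mxE.
Qed.

Lemma exists_Fp_char (p : nat) : exists chi : 'F_p -> algC,
  [/\ {morph chi : x y / x + y >-> x * y}, forall x, `|chi x| = 1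
    & forall x, x != 0 -> chi x != 1].
Proof.
set k := #|'F_p|; have k_gt0 : (0 < k)%N by rewrite /k card_ord.
have [w w_prim] := C_prim_root_exists k_gt0.
have valD (x y : 'F_p) : val (x + y) = ((val x + val y) %% k)%N by rewrite /k card_ord.
exists (fun x => w ^+ val x); split.
- by move=> x y; rewrite valD (prim_expr_mod w_prim) exprD.
- move=> x; have : `|w| ^+ k == 1 by rewrite -normrX (prim_expr_order w_prim) normr1.
  by rewrite normrX pexpr_eq1 // => /eqP ->; rewrite expr1n.
- move=> x x0; rewrite -(prim_order_dvd w_prim); apply: contra x0 => /dvdn_leq.
  rewrite lt0n leqNgt (_ : (val x < k)%N); last by rewrite /k card_ord ltn_ord.
  by rewrite -[x == 0](inj_eq val_inj) => x_0; apply: contraTT isT.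
Qed.

Lemma exists_nontrivial_char (F : finFieldType) : exists psi : F -> algC,
  [/\ {morph psi : x y / x + y >-> x * y}, forall x, `|psi x| = 1 & psi 1 != 1].
Proof.
have [p _ chF] := finPcharP F.
have [lam lamD lam1] := exists_Fp_functional chF.
have [chi [chiD chi_norm chi_nontriv]] := exists_Fp_char p.
by exists (chi \o lam); split=> [x y|x|] /=; rewrite ?lamD ?chiD ?chi_nontriv.
Qed.

Lemma card_annihilator_le (F : finFieldType) (m n p : nat) (M : 'M[F]_(n, p)) :
  M != 0 -> (#|[set Y : 'M[F]_(m, n) | Y *m M == 0%R]| * #|F| ^ m <= #|F| ^ (m * n))%N.
Proof.
(* With c a nonzero column of M and w c = 1, (Y, v) |-> Y + v w injects
   {Y | Y c = 0} x F^m into the m x n matrices. *)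
case/matrix0Pn=> i [j Mij].
pose c := col j M; pose w : 'rV[F]_n := (M i j)^-1 *: delta_mx 0 i.
have wc : w *m c = 1%:M.
  apply/rowP => k; rewrite ord1 -scalemxAl -rowE !mxE eqxx mulVf //.
pose ZC := [set Y : 'M[F]_(m, n) | Y *m c == 0].
have sub_ZC : [set Y : 'M[F]_(m, n) | Y *m M == 0] \subset ZC.
  by apply/subsetP => Y; rewrite !inE /c colE mulmxA => /eqP ->; rewrite mul0mx.
pose Psi (Yv : 'M[F]_(m, n) * 'cV[F]_m) := Yv.1 + Yv.2 *m w.
have PsiK Yv : Yv \in setX ZC [set: 'cV_m] -> Psi Yv *m c = Yv.2.
  case: Yv => Y v; rewrite !inE andbT /= => /eqP Yc.
  by rewrite /Psi mulmxDl Yc add0r -mulmxA wc mulmx1.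
have Psi_inj : {in setX ZC [set: 'cV_m] &, injective Psi}.
  move=> [Y v] [Y' v'] YvZ Yv'Z eqPsi.
  have ev : v = v' by rewrite -[v](PsiK _ YvZ) -[v'](PsiK _ Yv'Z) eqPsi.
  by move: eqPsi; rewrite /Psi /= ev => /addIr ->.
have := max_card (Psi @: setX ZC [set: 'cV_m]).
rewrite card_in_imset // cardsX cardsT !card_mx muln1; apply: leq_trans.
by rewrite leq_mul2r subset_leq_card ?orbT.
Qed.

Lemma sum_pair4 (R : nmodType) (T1 T2 T3 T4 : finType) (P1 : pred T1) (P2 : pred T2)
    (P3 : pred T3) (P4 : pred T4) (G : T1 * T2 * T3 * T4 -> R) :
  \sum_(x | [&& P1 x.1.1.1, P2 x.1.1.2, P3 x.1.2 & P4 x.2]) G x =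
  \sum_(a | P1 a) \sum_(b | P2 b) \sum_(c | P3 c) \sum_(e | P4 e) G (a, b, c, e).
Proof.
rewrite [RHS]pair_big [RHS]pair_big [RHS]pair_big /=.
by apply: eq_big => [[[[a b] c] e]|[[[a b] c] e]] //=; rewrite !andbA.
Qed.

Definition in_sol_sets (F : finFieldType) (d n : nat)
    (As Bs : 'I_d -> {set 'M[F]_n}) (Es Fs : {set 'M[F]_n}) (x : sol_tuple F d n) :=
  [&& x.1.1.1 \in family As, x.1.1.2 \in family Bs, x.1.2 \in Es & x.2 \in Fs].

Lemma count_solE (F : finFieldType) (d n : nat)
    (As Bs : 'I_d -> {set 'M[F]_n}) (Es Fs : {set 'M[F]_n}) :
  count_sol As Bs Es Fs = \sum_(x | in_sol_sets As Bs Es Fs x)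
    (\sum_(i < d) x.1.1.1 i *m x.1.1.2 i == x.1.2 + x.2 : nat).
Proof.
rewrite /count_sol -sum1dep_card (eq_bigl (fun x => in_sol_sets As Bs Es Fs x &&
  (\sum_(i < d) x.1.1.1 i *m x.1.1.2 i == x.1.2 + x.2))) => [|x]; last first.
  by rewrite /in_sol_sets -!andbA.
by rewrite big_mkcondr; apply: eq_bigr => x _; case: (_ == _).
Qed.

Section MatrixCharacterSums.
Variables (F : finFieldType) (psi : F -> algC).
Hypothesis psiD : {morph psi : x y / x + y >-> x * y}.
Hypothesis psi_norm : forall x, `|psi x| = 1.
Hypothesis psi1 : psi 1 != 1.

Lemma psi0 : psi 0 = 1.
Proof.
have psi0_neq0 : psi 0 != 0 by rewrite -normr_eq0 psi_norm oner_eq0.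
by apply: (mulfI psi0_neq0); rewrite -psiD addr0 mulr1.
Qed.

Lemma psiN x : psi (- x) = (psi x)^*.
Proof.
have psix_neq0 : psi x != 0 by rewrite -normr_eq0 psi_norm oner_eq0.
apply: (mulfI psix_neq0).
by rewrite -psiD subrr psi0 -normCK psi_norm expr1n.
Qed.

Lemma psi_sum (I : Type) (r : seq I) (P : pred I) (g : I -> F) :
  psi (\sum_(i <- r | P i) g i) = \prod_(i <- r | P i) psi (g i).
Proof. exact: (big_morph psi psiD psi0). Qed.

Variable n : nat.
Local Notation V := 'M[F]_n.
Local Notation Q := ((#|F| ^ (n * n))%:R : algC).

Lemma mxtrace_mul_delta (W : V) i j : \tr (W *m delta_mx j i) = W i j.
Proof.
rewrite /mxtrace (bigD1 i) //= big1 => [|k ki].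
  rewrite addr0 mxE (bigD1 j) //= big1 => [|l lj]; first by rewrite mxE !eqxx mulr1 addr0.
  by rewrite mxE (negbTE lj) mulr0.
by rewrite mxE big1 // => l _; rewrite mxE (negbTE ki) andbF mulr0.
Qed.

Lemma sum_psi_trace (W : V) : \sum_(X : V) psi (\tr (W *m X)) = (W == 0)%:R * Q.
Proof.
have [->|/matrix0Pn [i [j Wij]]] := eqVneq W 0.
  under eq_bigr do rewrite mul0mx mxtrace0 psi0.
  by rewrite sumr_const card_mx mul1r.
rewrite mul0r (@sum_char_eq0 _ _ _ ((W i j)^-1 *: delta_mx j i)) //.
  by move=> X Y; rewrite mulmxDr mxtraceD psiD.
by rewrite -scalemxAr mxtraceZ mxtrace_mul_delta mulVf.
Qed.

Lemma sum_normCK_char_sum (B : {set V}) (L : V -> V) :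
  \sum_(X : V) `|\sum_(b in B) psi (\tr (L b *m X))| ^+ 2 =
  Q * (\sum_(b in B) \sum_(b' in B) (L b == L b' : nat))%:R.
Proof.
under [LHS]eq_bigr do rewrite normCK rmorph_sum big_distrlr /=.
rewrite exchange_big natr_sum mulr_sumr; apply: eq_bigr => b _.
rewrite exchange_big natr_sum mulr_sumr; apply: eq_bigr => b' _.
under eq_bigr do rewrite -psiN -psiD -raddfB -mulmxBl.
by rewrite sum_psi_trace subr_eq0 mulrC.
Qed.

Lemma sum_eq_mulmx_le (B : {set V}) (M : V) : M != 0 ->
  ((\sum_(b in B) \sum_(b' in B) (b *m M == b' *m M : nat)) * #|F| ^ n
     <= #|B| * #|F| ^ (n * n))%N.
Proof.
move=> M_neq0; rewrite big_distrl -sum_nat_const /=; apply: leq_sum => b _.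
apply: leq_trans (card_annihilator_le n M_neq0); rewrite leq_mul2r.
apply/orP; right; rewrite -sum1dep_card (reindex_inj (addrI b)) /= big_mkcond /=.
rewrite [X in (_ <= X)%N]big_mkcond; apply: leq_sum => Y _.
rewrite mulmxDl -{1}[b *m M]addr0 (inj_eq (addrI _)) eq_sym.
by case: (_ \in B); case: (_ == _).
Qed.

Definition prodset_sum (A B : {set V}) (M : V) : algC :=
  \sum_(a in A) \sum_(b in B) psi (\tr (M *m (a *m b))).

Definition indic_fourier (E : {set V}) (M : V) : algC :=
  \sum_(x in E) psi (- \tr (M *m x)).

Lemma prodset_sum0 (A B : {set V}) : prodset_sum A B 0 = (#|A| * #|B|)%:R.
Proof.
rewrite /prodset_sum; under eq_bigr do under eq_bigr do rewrite mul0mx mxtrace0 psi0.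
by rewrite !sumr_const -mulrnA mulnC.
Qed.

Lemma indic_fourier0 (E : {set V}) : indic_fourier E 0 = #|E|%:R.
Proof. by rewrite /indic_fourier; under eq_bigr do rewrite mul0mx mxtrace0 oppr0 psi0; rewrite sumr_const. Qed.

Lemma parseval (E : {set V}) : \sum_(M : V) `|indic_fourier E M| ^+ 2 = Q * #|E|%:R.
Proof.
under eq_bigr => M _.
  rewrite (_ : indic_fourier E M = \sum_(x in E) psi (\tr (- x *m M))); last first.
    by apply: eq_bigr => x _; rewrite mulNmx raddfN mxtrace_mulC.
  over.
rewrite sum_normCK_char_sum; congr (_ * _%:R).
rewrite -sum1_card; apply: eq_bigr => x xE.
by rewrite (bigD1 x) //= eqxx big1 // => y /andP [_ /negbTE]; rewrite (inj_eq oppr_inj) eq_sym => ->.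
Qed.

Lemma prodset_sum_bound (A B : {set V}) (M : V) : M != 0 ->
  `|prodset_sum A B M| ^+ 2 * (#|F| ^ n)%:R <= (#|A| * #|B|)%:R * Q ^+ 2.
Proof.
move=> M_neq0.
pose T a := \sum_(b in B) psi (\tr ((b *m M) *m a)).
have prodsetE : prodset_sum A B M = \sum_(a in A) T a.
  apply: eq_bigr => a _; apply: eq_bigr => b _.
  by rewrite mulmxA mxtrace_mulC mulmxA.
have sum_T_bound : \sum_(a in A) `|T a| ^+ 2 <= \sum_a `|T a| ^+ 2.
  by rewrite [X in _ <= X](bigID (mem A)) /= lerDl sumr_ge0 // => a _; rewrite exprn_ge0.
have qn_gt0 : 0 < (#|F| ^ n)%:R :> algC by rewrite ltr0n expn_gt0 (ltnW (finNzRing_gt1 F)).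
apply: le_trans (_ : #|A|%:R * (Q * (\sum_(b in B) \sum_(b' in B)
        (b *m M == b' *m M : nat))%:R) * (#|F| ^ n)%:R <= _).
  rewrite ler_pM2r // -(sum_normCK_char_sum B (mulmx^~ M)).
  apply: le_trans (_ : (\sum_(a in A) `|T a|) ^+ 2 <= _).
    by rewrite prodsetE ler_sqr ?nnegrE ?sumr_ge0 ?ler_norm_sum.
  apply: le_trans (sqr_sum_le_card _ (fun a => normr_real (T a))) _.
  by rewrite ler_wpM2l.
rewrite -natrX -!natrM ler_nat.
have := sum_eq_mulmx_le B M_neq0; set S := (\sum_(b in B) _)%N => le_S.
rewrite [X in (X <= _)%N](_ : _ = #|A| * #|F| ^ (n * n) * (S * #|F| ^ n))%N; last by ring.
by apply: leq_trans (leq_mul (leqnn _) le_S) _; apply: eq_leq; ring.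
Qed.

Lemma prod_prodset_sum (d : nat) (As Bs : 'I_d -> {set V}) (M : V) :
  \prod_(i < d) prodset_sum (As i) (Bs i) M =
  \sum_(fa in family As) \sum_(fb in family Bs)
    psi (\tr (M *m \sum_(i < d) fa i *m fb i)).
Proof.
rewrite (bigA_distr_big_dep (fun i a => a \in As i)); apply: eq_bigr => fa _.
rewrite (bigA_distr_big_dep (fun i b => b \in Bs i)); apply: eq_bigr => fb _.
by rewrite mulmx_sumr raddf_sum psi_sum.
Qed.

Lemma sum_sol_sets_psi (d : nat) (As Bs : 'I_d -> {set V}) (Es Fs : {set V}) (M : V) :
  \sum_(x | in_sol_sets As Bs Es Fs x)
    psi (\tr (M *m (\sum_(i < d) x.1.1.1 i *m x.1.1.2 i - x.1.2 - x.2))) =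
  \prod_(i < d) prodset_sum (As i) (Bs i) M * indic_fourier Es M * indic_fourier Fs M.
Proof.
rewrite sum_pair4 prod_prodset_sum /indic_fourier !big_distrl /=.
apply: eq_bigr => fa _; rewrite !big_distrl /=; apply: eq_bigr => fb _.
rewrite -mulrA big_distrlr big_distrr /=; apply: eq_bigr => e _.
rewrite big_distrr /=; apply: eq_bigr => f _.
by rewrite !mulmxBr !raddfB /= !psiD mulrA.
Qed.

Lemma fourier_count (d : nat) (As Bs : 'I_d -> {set V}) (Es Fs : {set V}) :
  Q * (count_sol As Bs Es Fs)%:R = \sum_(M : V)
    \prod_(i < d) prodset_sum (As i) (Bs i) M * indic_fourier Es M * indic_fourier Fs M.
Proof.
under [RHS]eq_bigr do rewrite -sum_sol_sets_psi.
rewrite exchange_big count_solE natr_sum mulr_sumr; apply: eq_bigr => x _.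
under eq_bigr do rewrite mxtrace_mulC.
by rewrite sum_psi_trace -addrA -opprD subr_eq0 mulrC.
Qed.

Lemma prod_prodset_sum_bound (d : nat) (As Bs : 'I_d -> {set V}) (M : V) : M != 0 ->
  `|\prod_(i < d) prodset_sum (As i) (Bs i) M| ^+ 2 * ((#|F| ^ n) ^ d)%:R <=
  (\prod_(i < d) (#|As i| * #|Bs i|))%:R * Q ^+ (2 * d).
Proof.
move=> M_neq0.
have -> : ((#|F| ^ n) ^ d)%:R = \prod_(i < d) (#|F| ^ n)%:R :> algC.
  by rewrite prodr_const card_ord natrX.
have -> : Q ^+ (2 * d) = \prod_(i < d) Q ^+ 2 by rewrite prodr_const card_ord -exprM mulnC.
rewrite normr_prod -prodrXl -big_split natr_prod -big_split /=.
apply: ler_prod => i _; rewrite mulr_ge0 ?exprn_ge0 //=.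
exact: prodset_sum_bound.
Qed.

Lemma count_sol_sqr_dev_le (d : nat) (As Bs : 'I_d -> {set V}) (Es Fs : {set V}) (P : nat) :
  P = (#|Es| * #|Fs| * \prod_(i < d) (#|As i| * #|Bs i|))%N ->
  (Q * (count_sol As Bs Es Fs)%:R - P%:R) ^+ 2 * ((#|F| ^ n) ^ d)%:R
    <= P%:R * Q ^+ (2 * d + 2).
Proof.
move=> P_def; set z : algC := ((#|F| ^ n) ^ d)%:R.
pose U M := \prod_(i < d) prodset_sum (As i) (Bs i) M.
pose PA := (\prod_(i < d) (#|As i| * #|Bs i|))%N.
pose a M := `|U M| * `|indic_fourier Es M|; pose b M := `|indic_fourier Fs M|.
have devE : Q * (count_sol As Bs Es Fs)%:R - P%:R =
    \sum_(M | M != 0) U M * indic_fourier Es M * indic_fourier Fs M.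
  rewrite fourier_count (bigD1 0) //= !indic_fourier0 /U.
  under eq_bigr do rewrite prodset_sum0.
  by rewrite -natr_prod -!natrM P_def -mulnA mulnC addrAC subrr add0r.
have dev_le : `|Q * (count_sol As Bs Es Fs)%:R - P%:R| <= \sum_(M | M != 0) a M * b M.
  rewrite devE; apply: le_trans (ler_norm_sum _ _ _) _.
  by apply: ler_sum => M _; rewrite !normrM.
have sum_b : \sum_(M | M != 0) b M ^+ 2 <= Q * #|Fs|%:R.
  by rewrite -parseval [X in _ <= X](bigD1 0) //= lerDr exprn_ge0.
have sum_a : (\sum_(M | M != 0) a M ^+ 2) * z <= PA%:R * Q ^+ (2 * d) * (Q * #|Es|%:R).
  rewrite -parseval mulr_suml mulr_sumr [X in _ <= X](bigD1 0) //=.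
  apply: le_trans (_ : _ <= \sum_(M | M != 0)
    PA%:R * Q ^+ (2 * d) * `|indic_fourier Es M| ^+ 2) _; last first.
    by rewrite lerDr !mulr_ge0 ?exprn_ge0.
  apply: ler_sum => M M_neq0; rewrite exprMn mulrAC ler_wpM2r ?exprn_ge0 //.
  exact: prod_prodset_sum_bound.
rewrite -real_normK ?realB ?realM ?realn //.
apply: le_trans (_ : (\sum_(M | M != 0) a M * b M) ^+ 2 * z <= _).
  rewrite ler_wpM2r // ler_sqr ?nnegrE ?dev_le ?sumr_ge0 // => M _.
  by rewrite /a /b !mulr_ge0.
apply: le_trans (_ : (\sum_(M | M != 0) a M ^+ 2) * (\sum_(M | M != 0) b M ^+ 2) * z <= _).
  by rewrite ler_wpM2r ?cauchy_schwarz // => M; rewrite ?realM ?normr_real.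
rewrite mulrAC; apply: le_trans (ler_pM _ _ sum_a sum_b) _.
- by rewrite mulr_ge0 ?sumr_ge0 // => M _; rewrite exprn_ge0 ?mulr_ge0.
- by rewrite sumr_ge0 // => M _; rewrite /b exprn_ge0.
by rewrite P_def /PA !natrM exprD le_eqVlt; apply/orP; left; apply/eqP; ring.
Qed.

End MatrixCharacterSums.

(* The character sums live in algC, the theorem in an arbitrary rcfType. *)
Lemma ler_natB_sqr_transfer (R1 R2 : numDomainType) (a b c e : nat) :
  (a%:R - b%:R : R1) ^+ 2 * c%:R <= e%:R -> (a%:R - b%:R : R2) ^+ 2 * c%:R <= e%:R.
Proof.
have intE (R : numDomainType) : (a%:R - b%:R : R) ^+ 2 * c%:R = ((a%:Z - b%:Z) ^+ 2 * c%:Z)%:~R.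
  by rewrite rmorphM rmorphXn rmorphB.
by rewrite !intE !pmulrn !ler_int.
Qed.

Lemma ler_norm_subr_div (R : rcfType) (N P Q c : R) : 0 < Q -> 0 <= P -> 0 <= c ->
  (Q * N - P) ^+ 2 <= P * (Q * c) ^+ 2 -> `|N - P / Q| <= c * Num.sqrt P.
Proof.
move=> Q_gt0 P_ge0 c_ge0 dev_le.
have -> : N - P / Q = (Q * N - P) / Q by field; rewrite gt_eqF.
rewrite normf_div (gtr0_norm Q_gt0) ler_pdivrMr // -sqrtr_sqr.
have -> : c * Num.sqrt P * Q = Num.sqrt (P * (Q * c) ^+ 2).
  by rewrite sqrtrM // sqrtr_sqr ger0_norm ?mulr_ge0 ?(ltW Q_gt0) //; ring.
by rewrite ler_sqrt // mulr_ge0 ?sqr_ge0.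
Qed.

Theorem theorem1p2 (R : rcfType) (d n : nat) (hd : (1 <= d)%N) (hn : (2 <= n)%N) :
  exists C : R, 0 < C /\
  forall (F : finFieldType), odd #|F| ->
  forall (As Bs : 'I_d -> {set 'M[F]_n}) (Es Fs : {set 'M[F]_n}),
    let q : R := (#|F|)%:R in
    let P : nat := (#|Es| * #|Fs| * \prod_(i < d) (#|As i| * #|Bs i|))%N in
    `| (count_sol As Bs Es Fs)%:R - P%:R / q ^+ (n * n) |
      <= C * (Num.sqrt q ^+ (2 * d * (n * n)) / Num.sqrt q ^+ ((d - 1) * n + 1))
           * Num.sqrt (P%:R).
Proof.
exists 1; split=> // F _ As Bs Es Fs; cbv zeta; rewrite mul1r.
set q : R := #|F|%:R; set P := (#|Es| * #|Fs| * _)%N.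
have [psi [psiD psi_norm psi1]] := exists_nontrivial_char F.
have := count_sol_sqr_dev_le psiD psi_norm psi1 (erefl P).
rewrite -natrM -natrX -natrM => /(ler_natB_sqr_transfer R).
rewrite [(_ * count_sol _ _ _ _)%:R]natrM [(P * _)%:R]natrM !natrX -/q.
set Q := q ^+ (n * n) => dev_le.
have q_gt1 : 1 < q by rewrite ltr1n finNzRing_gt1.
have q_gt0 : 0 < q := lt_trans ltr01 q_gt1.
set s := Num.sqrt q; set k := ((d - 1) * n + 1)%N.
have s_sqr : s ^+ 2 = q by rewrite sqr_sqrtr ?ltW.
have s_pow2 m : (s ^+ m) ^+ 2 = q ^+ m by rewrite -exprM mulnC exprM s_sqr.
have Qc_sqr : (Q * (s ^+ (2 * d * (n * n)) / s ^+ k)) ^+ 2 * q ^+ k = Q ^+ (2 * d + 2).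
  rewrite exprMn expr_div_n !s_pow2 -mulrA divfK ?expf_neq0 ?gt_eqF // /Q -!exprM -exprD.
  by congr (_ ^+ _); lia.
apply: ler_norm_subr_div; rewrite ?exprn_gt0 ?ler0n ?divr_ge0 ?exprn_ge0 ?sqrtr_ge0 //.
rewrite -(ler_pM2r (exprn_gt0 k q_gt0)) -[P%:R * _ * _]mulrA Qc_sqr; apply: le_trans dev_le.
by rewrite ler_wpM2l ?sqr_ge0 // -exprM ler_eXn2l // /k; nia.
Qed.
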